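(* Let $K$ be a compact line, $Q\subseteq K$ and $(F_i)_{i\in I}$ a weak*-null family in $\mathrm{NBV}(K)$ which is of type $c_0\ell_1$ over $Q$. Then the set $\{t\in Q\cap(H\setminus H^+):(F_i(t))_{i\in I}\notin c_0(I)\}$ is countable for every closed separable subset $H$ of $K$, and moreover the set $\{t\in Q\cap H:(F_i(t))_{i\in I}\notin c_0(I)\}$ is countable for every closed separable convex subset $H$ of $K$.
   Context: A compact line is a totally ordered set which is compact in its order topology; a closed subset $H$ is a compact line with the induced order, and $H^+$ denotes its right-isolated points ($\max H$ or points having an immediate successor in $H$). A subset $H$ is convex if $t\le s$ in $H$ implies $[t,s]\subseteq H$. $\mathrm{NBV}(K)$ is the space of right-continuous real maps of bounded variation on $K$, identified with $C(K)^*$ via $F_\mu(t)=\mu([\min K,t])$. $\lim_{i\in I}a_i=0$ means $\{i:|a_i|\ge\varepsilon\}$ is finite for every $\varepsilon>0$; $c_0(I)$ is the set of such families. $(F_i)$ is weak*-null if $\lim_{i\in I}\int f\,d\mu_i=0$ for every $f\in C(K)$, $\mu_i$ associated to $F_i$. $(F_i)$ is of type $c_0\ell_1$ over $Q$ if $F_i(t)=a_{i,t}+b_{i,t}$ ($i\in I,t\in Q$) with $\lim_{i\in I}a_{i,t}=0$ for each $t\in Q$ and $\sup_i\sum_{t\in Q}|b_{i,t}|<\infty$. *)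

From HB Require Import structures.
From mathcomp Require Import all_boot all_order all_algebra.
From mathcomp Require Import all_classical all_reals all_analysis.

Set Implicit Arguments.
Unset Strict Implicit.
Unset Printing Implicit Defensive.

Import Order.TTheory GRing.Theory Num.Theory numFieldNormedType.Exports.
Local Open Scope classical_set_scope.
Local Open Scope ring_scope.

(* The carrier K of a line, pointed by some element k0 (a compact line has a
   minimum min K, used in the definition of F_mu, hence is nonempty).
   [pointed K k0] is just K, equipped with the pointed structure given by k0;
   this is only needed to build the Borel measurable space below. *)
Definition pointed {d : Order.disp_t} (K : orderTopologicalType d) (k0 : K) : Type := K.
HB.instance Definition _ {d : Order.disp_t} (K : orderTopologicalType d) (k0 : K) :=
  Choice.on (pointed k0).
HB.instance Definition _ {d : Order.disp_t} (K : orderTopologicalType d) (k0 : K) :=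
  isPointed.Build (pointed k0) k0.

Section compact_lines.
Context {d : Order.disp_t} (K : orderTopologicalType d).

Definition compact_line := compact [set: K].

Definition Borel (k0 : K) := g_sigma_algebraType (@open K : set (set (pointed k0))).

Definition separable_set (H : set K) :=
  exists D : set K, [/\ D `<=` H, countable D & H `<=` closure D].

Definition order_convex (H : set K) :=
  forall t s u : K, H t -> H s -> (t <= u <= s)%O -> H u.

(* t belongs to H^+ : t = max H, or t has an immediate successor in H *)
Definition right_isolated (H : set K) (t : K) :=
  H t /\
  ((forall s, H s -> (s <= t)%O) \/
   exists s, [/\ H s, (t < s)%O & forall u, H u -> ~ (t < u < s)%O]).

End compact_lines.

Section families.
Context {R : realType}.

Definition c0fam (I : Type) (a : I -> R) :=
  forall e : R, 0 < e -> finite_set [set i | e <= `|a i|].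

Definition finite_radon {d : Order.disp_t} {K : orderTopologicalType d} {k0 : K}
    (mu : {measure set (Borel k0) -> \bar R}) :=
  (mu setT < +oo)%E /\
  forall A : set (Borel k0), measurable A ->
    forall e : R, 0 < e ->
      exists C : set K, [/\ compact C, C `<=` A & (mu A <= mu C + e%:E)%E].

(* A regular finite signed Borel measure mu = mup - mun (difference of two
   finite Radon measures), and its distribution function
   F_mu(t) = mu([min K, t]) = mu({s | s <= t}). *)
Definition Fmu {d : Order.disp_t} {K : orderTopologicalType d} {k0 : K}
    (mup mun : {measure set (Borel k0) -> \bar R}) (t : K) : R :=
  fine (mup [set s : Borel k0 | ((s : K) <= t)%O]) - fine (mun [set s : Borel k0 | ((s : K) <= t)%O]).

Definition int_signed {d : Order.disp_t} {K : orderTopologicalType d} {k0 : K}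
    (mup mun : {measure set (Borel k0) -> \bar R}) (f : K -> R) : R :=
  Rintegral mup setT f - Rintegral mun setT f.

Definition weak_star_null {d : Order.disp_t} {K : orderTopologicalType d} {k0 : K}
    (I : Type) (mup mun : I -> {measure set (Borel k0) -> \bar R}) :=
  forall f : K -> R, continuous f -> c0fam (fun i => int_signed (mup i) (mun i) f).

Definition type_c0l1 {K : choiceType} (I : Type) (F : I -> K -> R) (Q : set K) :=
  exists (a b : I -> K -> R),
    [/\ forall i t, Q t -> F i t = a i t + b i t,
        forall t, Q t -> c0fam (fun i => a i t)
      & exists M : R, forall i, (\esum_(t in Q) (`|b i t|)%:E <= M%:E)%E].

End families.

From HB Require Import structures.
From mathcomp Require Import all_boot all_order all_algebra.
From mathcomp Require Import finmap.
From mathcomp Require Import all_classical all_reals all_analysis.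
From mathcomp Require Import measurable_realfun lra.

(* Fix a countable set D dense in H.  At a point t of H \ H^+, the points of D
   accumulate at t from the right, so by right continuity of the distribution
   functions F_i(t) is approximated by integrals against Urysohn functions equal
   to 1 left of u and 0 right of v, for u < v in D.  These are countably many
   continuous functions, so weak*-nullity makes the set J of indices i for which
   one of these integrals is nonzero countable, and F_i(t) = 0 for i outside J.
   Hence if (F_i(t)) is not c_0 then b_{i,t} <> 0 for some i in J, and since each
   (b_{i,t})_t is summable this happens for only countably many t.  When H is
   convex, a point t of H^+ other than max H has an immediate successor in K, so
   the indicator of ]-oo, t] is continuous and (F_i(t)) = (int 1_]-oo,t] dmu_i)
   is c_0 by weak*-nullity. *)

Set Implicit Arguments.
Unset Strict Implicit.
Unset Printing Implicit Defensive.

Import Order.TTheory GRing.Theory Num.Theory numFieldNormedType.Exports.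
Local Open Scope classical_set_scope.
Local Open Scope ring_scope.

Lemma countableU (T : Type) (A B : set T) :
  countable A -> countable B -> countable (A `|` B).
Proof.
move=> cA cB; rewrite -bigcup2E.
apply: bigcup_countable; first exact: countableP.
by move=> [|[|n]] _ //=; exact: countable0.
Qed.

Lemma is_subset1_countable (T : Type) (A : set T) : is_subset1 A -> countable A.
Proof.
have [[x Ax] A1|/forallNP A0 _] := pselect (exists x, A x).
  by apply: sub_countable (countable1 x); apply: subset_card_le => y Ay; exact: A1.
by rewrite (_ : A = set0) ?countable0 //; apply/seteqP; split => // y /A0.
Qed.

Section c0_families.
Context {R : realType}.

Lemma c0fam_le (I : Type) (x y : I -> R) :
  (forall i, `|x i| <= `|y i|) -> c0fam y -> c0fam x.
Proof.
move=> xy cy e e0; apply: sub_finite_set (cy e e0) => i /= exi.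
exact: le_trans exi (xy i).
Qed.

Lemma countable_neq0_of_finite_ge (T : Type) (A : set T) (x : T -> R) :
  (forall e, 0 < e -> finite_set (A `&` [set i | e <= `|x i|])) ->
  countable (A `&` [set i | x i != 0]).
Proof.
move=> fin; have -> : A `&` [set i | x i != 0] =
    \bigcup_(m in [set: nat]) (A `&` [set i | m.+1%:R^-1 <= `|x i|]).
  apply/seteqP; split => [i [Ai xi0]|i [m _ [Ai xim]]].
    have [m] : exists m : nat, 0 + m.+1%:R^-1 < `|x i|.
      by apply: ltr_add_invr; rewrite normr_gt0.
    by rewrite add0r => /ltW xim; exists m.
  by split => //=; rewrite -normr_gt0; apply: lt_le_trans xim; rewrite invr_gt0.
apply: bigcup_countable => [|m _]; first exact: countableP.
by apply/finite_set_countable/fin; rewrite invr_gt0.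
Qed.

Lemma c0fam_countable_neq0 (I : Type) (x : I -> R) :
  c0fam x -> countable [set i | x i != 0].
Proof.
move=> cx; rewrite -[X in countable X]setTI.
by apply: countable_neq0_of_finite_ge => e /cx; rewrite setTI.
Qed.

Lemma esum_bounded_finite_ge (T : choiceType) (Q : set T) (g : T -> R) (M c : R) :
  0 < c -> (\esum_(t in Q) (`|g t|)%:E <= M%:E)%E ->
  finite_set (Q `&` [set t | c <= `|g t|]).
Proof.
move=> c0 gM; apply: contrapT.
move=> /(infinite_set_fset (Num.Def.archi_bound (`|M| / c)))[B BS Bn].
have cardB : ((#|` B|%:R * c)%:E <= \esum_(t in Q) (`|g t|)%:E)%E.
  apply: esum_ge; exists [set` B].
    by split; [exact: finite_fset | by move=> x /BS []].
  rewrite fsbig_finite ?finite_fset // set_fsetK sumEFin lee_fin mulr_natl.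
  rewrite -iter_addr_0 -[#|` B|]count_predT -big_const_seq.
  rewrite big_seq [leRHS]big_seq; apply: ler_sum => x xB.
  by have [] := BS x xB.
have : `|M| / c < #|` B|%:R.
  apply: lt_le_trans (archi_boundP _) _; first by rewrite divr_ge0 // ltW.
  by rewrite ler_nat.
rewrite ltr_pdivrMr // => Mlt.
have := le_trans cardB gM; rewrite lee_fin; have := ler_norm M; lra.
Qed.

Lemma esum_bounded_countable_neq0 (T : choiceType) (Q : set T) (g : T -> R) (M : R) :
  (\esum_(t in Q) (`|g t|)%:E <= M%:E)%E -> countable (Q `&` [set t | g t != 0]).
Proof.
move=> gM; apply: countable_neq0_of_finite_ge => e e0.
exact: esum_bounded_finite_ge gM.
Qed.
End c0_families.

Lemma continuous_indic_clopen (T : topologicalType) (R : realType) (A : set T) :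
  clopen A -> continuous (\1_A : T -> R).
Proof.
move=> [oA cA]; apply/continuousP => B _; rewrite preimage_indic.
case: ifP => _; case: ifP => _; [exact: openT | exact: oA | | exact: open0].
exact: closed_openC.
Qed.

Lemma Rintegral_between_indic {d} {T : measurableType d} {R : realType}
    (mu : {measure set T -> \bar R}) (A B : set T) (f : T -> R) :
  measurable A -> measurable B -> (mu B < +oo)%E -> measurable_fun setT f ->
  (forall x, \1_A x <= f x <= \1_B x) ->
  fine (mu A) <= \int[mu]_x f x <= fine (mu B).
Proof.
move=> mA mB muB mf fAB.
have f0 x : [set: T] x -> (0 <= (f x)%:E)%E.
  by rewrite lee_fin (le_trans _ (andP (fAB x)).1).
have mfE : measurable_fun setT (fun x => (f x)%:E) by exact/measurable_EFinP.
have mIE (C : set T) : measurable C -> measurable_fun setT (fun x => (\1_C x : R)%:E).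
  by move=> mC; apply/measurable_EFinP; exact: measurable_indic.
have mAE := mIE A mA; have mBE := mIE B mB.
have fB : (\int[mu]_x (f x)%:E <= mu B)%E.
  rewrite -(setIT B) -(integral_indic mu measurableT mB).
  by apply: ge0_le_integral => // x _; rewrite lee_fin; case/andP: (fAB x).
have Af : (mu A <= \int[mu]_x (f x)%:E)%E.
  rewrite -(setIT A) -(integral_indic mu measurableT mA).
  by apply: ge0_le_integral => // x _; rewrite lee_fin; case/andP: (fAB x).
have finB : mu B \is a fin_num by rewrite ge0_fin_numE.
have finf : (\int[mu]_x (f x)%:E)%E \is a fin_num.
  by rewrite ge0_fin_numE ?integral_ge0 // (le_lt_trans fB).
have finA : mu A \is a fin_num.
  by rewrite ge0_fin_numE // (le_lt_trans Af) // -ge0_fin_numE ?integral_ge0.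
by rewrite /Rintegral !fine_le.
Qed.

Section order_topology.
Context {d : Order.disp_t} (K : orderTopologicalType d).
Implicit Types (t s u v : K) (D H : set K).

Lemma lray_clopen_of_gap t s : (t < s)%O -> (forall u, ~ (t < u < s)%O) ->
  clopen [set x : K | (x <= t)%O].
Proof.
move=> ts gap; split; last by rewrite -set_itvNyc; exact: lray_closed.
suff -> : [set x : K | (x <= t)%O] = `]-oo, s[%classic by exact: lray_open.
apply/seteqP; split => x /=; rewrite in_itv /=; first by move/le_lt_trans; apply.
by move=> xs; rewrite leNgt; apply/negP => tx; apply: (gap x); rewrite tx xs.
Qed.

Lemma not_right_isolated_above H t : H t -> ~ right_isolated H t ->
  exists2 h, H h & (t < h)%O.
Proof.
move=> Ht tH; apply: contrapT => noh; apply: tH; split => //; left => s Hs.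
by rewrite leNgt; apply/negP => ts; apply: noh; exists s.
Qed.

Definition approaches_right (D : set K) (t : K) :=
  (exists s, (t < s)%O) /\ forall s, (t < s)%O -> exists2 x, D x & (t < x < s)%O.

Fixpoint running_min (e : nat -> K) (n : nat) : K :=
  if n is m.+1 then Order.min (running_min e m) (e n) else e 0%N.

Lemma approaches_right_seq D t : countable D -> approaches_right D t ->
  exists u : nat -> K, [/\ forall n, D (u n) /\ (t < u n)%O,
    {homo u : m n / (m <= n)%N >-> (n <= m)%O} &
    forall s, (t < s)%O -> exists n, (u n < s)%O].
Proof.
move=> cD [[s0 ts0] Dt].
have [x0 Dx0 /andP[tx0 _]] := Dt s0 ts0.
have /pfcard_geP[Dt0|[e]] : countable (D `&` [set x | (t < x)%O]).
- by apply: sub_countable cD; apply: subset_card_le => x [].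
- by have : (D `&` [set x | (t < x)%O]) x0 by []; rewrite Dt0.
have eD n : (D `&` [set x | (t < x)%O]) (e n) by apply: funS.
exists (running_min e); split.
- elim=> [|n IH] /=; first exact: eD.
  by rewrite minEle; case: ifP => _; [exact: IH | exact: eD].
- apply: homo_leq => [x|y x z yx zy|n] /=; [exact: lexx | exact: le_trans zy yx | ].
  by rewrite ge_min lexx.
- move=> s ts; have [x Dx /andP[tx xs]] := Dt s ts.
  have [k _ ek] : (e @` setT) x by apply: surj.
  exists k; apply: le_lt_trans xs; rewrite -ek.
  by case: k {ek} => [|k] //=; rewrite ge_min lexx orbT.
Qed.

Hypothesis cK : compact_line K.

Lemma closed_has_min (C : set K) : closed C -> C !=set0 ->
  exists2 m, C m & forall c, C c -> (m <= c)%O.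
Proof.
move=> clC [c0 Cc0].
pose B a := C `&` [set x : K | (x <= a)%O].
have clB a : closed (B a).
  by apply: closedI => //; rewrite -set_itvNyc; exact: lray_closed.
have BF : ProperFilter (filter_from C B).
  apply: filter_from_proper; last by move=> a Ca; exists a; split => /=.
  apply: filter_from_filter; first by exists c0.
  move=> a b Ca Cb; exists (Order.min a b); first by rewrite minEle; case: ifP.
  by move=> x [Cx /=]; rewrite le_min => /andP[xa xb].
have [m [_ clm]] := (cK : compact _) _ BF filterT.
have Bm c : C c -> B c m.
  move=> Cc; rewrite ((closure_id _).1 (clB c)) => U Um.
  by apply: clm => //; exists c.
by exists m => [|c /Bm []//]; have [] := Bm c0 Cc0.
Qed.

Lemma not_right_isolated_between H t s : closed H -> H t -> ~ right_isolated H t ->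
  (t < s)%O -> exists h, [/\ H h, (t < h)%O & (h < s)%O].
Proof.
move=> clH Ht tH ts; apply: contrapT => noh.
have [h Hh th] := not_right_isolated_above Ht tH.
have sh : (s <= h)%O by rewrite leNgt; apply/negP => hs; apply: noh; exists h.
have clHs : closed (H `&` `[s, +oo[) by apply: closedI => //; exact: rray_closed.
have [|m [Hm sm] m_min] := closed_has_min clHs.
  by exists h; rewrite /= in_itv /= sh.
rewrite /= in_itv /= andbT in sm.
apply: tH; split => //; right; exists m; split => //; first exact: lt_le_trans sm.
move=> u Hu /andP[tu um]; have [us|su] := ltP u s; first by apply: noh; exists u.
by have := m_min u; rewrite /= in_itv /= su leNgt um => /(_ (conj Hu isT)).
Qed.

Lemma dense_approaches_right H D t : closed H -> D `<=` H -> H `<=` closure D ->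
  H t -> ~ right_isolated H t -> approaches_right D t.
Proof.
move=> clH DH HD Ht tH; split.
  by have [h _ th] := not_right_isolated_above Ht tH; exists h.
move=> s ts; have [h [Hh th hs]] := not_right_isolated_between clH Ht tH ts.
have [x [Dx /= xts]] : D `&` `]t, s[ !=set0.
  apply: HD Hh _ (open_nbhs_nbhs _).
  by split; [exact: itv_open | rewrite /= in_itv /= th hs].
by exists x; rewrite // -in_itv.
Qed.

Definition cutoff (R : realType) (u v : K) : K -> R :=
  Urysohn [set x | (v <= x)%O] [set x | (x <= u)%O].

Lemma cutoff_continuous (R : realType) u v : continuous (cutoff R u v).
Proof. exact: Urysohn_continuous. Qed.

Lemma cutoff_between_indic (R : realType) u v : (u < v)%O -> forall x,
  \1_[set x | (x <= u)%O] x <= cutoff R u v x <= \1_[set x | (x <= v)%O] x.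
Proof.
move=> uv x.
have sep : uniform_separator [set x | (v <= x)%O] [set x | (x <= u)%O].
  apply: normal_uniform_separator.
  - exact: compact_normal order_hausdorff cK.
  - by rewrite -set_itvcy; exact: rray_closed.
  - by rewrite -set_itvNyc; exact: lray_closed.
  - apply/seteqP; split => // y [/= vy yu].
    by have := lt_le_trans uv (le_trans vy yu); rewrite ltxx.
have : `[0, 1]%classic (cutoff R u v x) by apply: Urysohn_range; exists x.
rewrite /= in_itv /= => /andP[f0 f1].
have memE a : (x \in [set y : K | (y <= a)%O]) = (x <= a)%O.
  by apply/idP/idP => [/set_mem|/mem_set].
rewrite !indicE !memE; have [xu|ux] := leP x u.
  have -> : cutoff R u v x = 1 by apply: Urysohn_sub1 sep _ _; exists x.
  by rewrite (le_trans xu (ltW uv)) lexx.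
have [xv|vx] := leP x v; first by rewrite f0 f1.
have -> : cutoff R u v x = 0.
  by apply: Urysohn_sub0 sep _ _; exists x; [exact: ltW vx | reflexivity].
by rewrite lexx.
Qed.
End order_topology.

Section distribution_function.
Context {d : Order.disp_t} (K : orderTopologicalType d) (k0 : K) (R : realType).
Implicit Types (mu mup mun : {measure set Borel k0 -> \bar R}) (D : set K) (t u v : K).

Lemma open_measurable_Borel (A : set K) : open A -> measurable (A : set (Borel k0)).
Proof. exact: sub_sigma_algebra. Qed.

Lemma closed_measurable_Borel (A : set K) : closed A -> measurable (A : set (Borel k0)).
Proof.
move=> cA; rewrite -[A]setCK; apply: measurableC; apply: open_measurable_Borel.
exact: closed_openC.
Qed.

Lemma lray_measurable_Borel t : measurable [set s : Borel k0 | ((s : K) <= t)%O].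
Proof. by apply: closed_measurable_Borel; rewrite -set_itvNyc; exact: lray_closed. Qed.

Lemma continuous_measurable_fun_Borel (f : K -> R) : continuous f ->
  measurable_fun [set: Borel k0] (f : Borel k0 -> R).
Proof.
move=> /continuousP cf.
apply: (measurability _ (measurable_realfun.RGenOpens.measurableE R)).
move=> _ [_ [a [b ->] <-]]; rewrite setTI; apply: open_measurable_Borel; apply: cf.
exact: interval_open.
Qed.

Definition cdf mu (t : K) : R := fine (mu [set s : Borel k0 | ((s : K) <= t)%O]).

Lemma FmuE mup mun t : Fmu mup mun t = cdf mup t - cdf mun t.
Proof. by []. Qed.

Lemma cdf_le mu : (mu setT < +oo)%E -> {homo cdf mu : s t / (s <= t)%O >-> s <= t}.
Proof.
move=> muT s t st; have fin := lty_fin_num_fun muT.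
have mL u : measurable [set x : Borel k0 | ((x : K) <= u)%O] := lray_measurable_Borel u.
apply: fine_le; rewrite ?fin //.
by apply: le_measure; rewrite ?inE // => x /= /le_trans; apply.
Qed.

Lemma Rintegral_indic_lray mu t :
  \int[mu]_x (\1_[set s : Borel k0 | ((s : K) <= t)%O] x : R) = cdf mu t.
Proof.
by rewrite /Rintegral integral_indic ?setIT //; exact: lray_measurable_Borel.
Qed.

Lemma cdf_cvg_right mu t (u : nat -> K) : (mu setT < +oo)%E ->
  (forall n, (t < u n)%O) -> {homo u : m n / (m <= n)%N >-> (n <= m)%O} ->
  (forall s, (t < s)%O -> exists n, (u n < s)%O) ->
  cdf mu (u n) @[n --> \oo] --> cdf mu t.
Proof.
move=> muT tu u_noninc u_inf; have fin := lty_fin_num_fun muT.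
pose L n := [set s : Borel k0 | ((s : K) <= u n)%O].
have capL : \bigcap_n L n = [set s : Borel k0 | ((s : K) <= t)%O].
  apply/seteqP; split => x /=.
    move=> Lx; rewrite leNgt; apply/negP => /u_inf[n unx].
    by have := Lx n I; rewrite /L /= leNgt unx.
  by move=> xt n _; exact: le_trans xt (ltW (tu n)).
have : (mu \o L) n @[n --> \oo] --> mu (\bigcap_n L n).
  apply: nonincreasing_cvg_mu; rewrite ?capL.
  - by rewrite -ge0_fin_numE // fin //; exact: lray_measurable_Borel.
  - by move=> n; exact: lray_measurable_Borel.
  - exact: lray_measurable_Borel.
  - by move=> m n mn; apply/subsetPset => x /le_trans; apply; exact: u_noninc.
rewrite capL -(fineK (fin _ (lray_measurable_Borel t))).
exact: fine_cvg.
Qed.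

Lemma cdf_right_approx mu D t eta : (mu setT < +oo)%E -> countable D ->
  approaches_right D t -> 0 < eta ->
  exists2 v, D v /\ (t < v)%O & cdf mu v <= cdf mu t + eta.
Proof.
move=> muT cD Dt eta0; have [u [uD u_noninc u_inf]] := approaches_right_seq cD Dt.
have /cvgrPdist_le/(_ eta eta0)[N _ uN] :=
  cdf_cvg_right muT (fun n => (uD n).2) u_noninc u_inf.
exists (u N); first exact: uD.
by have := uN N (leqnn N); rewrite /= distrC => /(le_trans (ler_norm _)); lra.
Qed.

Hypothesis cK : compact_line K.

Lemma cdf_le_Rintegral_cutoff mu u v : (mu setT < +oo)%E -> (u < v)%O ->
  cdf mu u <= \int[mu]_x cutoff R u v x <= cdf mu v.
Proof.
move=> muT uv; apply: Rintegral_between_indic; try exact: lray_measurable_Borel.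
- by rewrite (le_lt_trans _ muT) // le_measure ?inE //; exact: lray_measurable_Borel.
- by apply: continuous_measurable_fun_Borel; exact: cutoff_continuous.
- exact: cutoff_between_indic.
Qed.

Lemma Fmu_eq0_of_cutoff mup mun D t :
  (mup setT < +oo)%E -> (mun setT < +oo)%E -> countable D -> approaches_right D t ->
  (forall u v, D u -> D v -> (u < v)%O -> int_signed mup mun (cutoff R u v) = 0) ->
  Fmu mup mun t = 0.
Proof.
move=> mupT munT cD Dt cutoff0; apply/eqP; rewrite -normr_le0.
apply/ler_addgt0Pr => eta eta0; rewrite add0r.
have [v1 [Dv1 tv1] v1t] := cdf_right_approx mupT cD Dt eta0.
have [v2 [Dv2 tv2] v2t] := cdf_right_approx munT cD Dt eta0.
pose v := Order.min v1 v2.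
have Dv : D v by rewrite /v minEle; case: ifP.
have tv : (t < v)%O by rewrite lt_min tv1 tv2.
have [u Du /andP[tu uv]] := Dt.2 v tv.
have /andP[pu pv] := cdf_le_Rintegral_cutoff mupT uv.
have /andP[nu nv] := cdf_le_Rintegral_cutoff munT uv.
have ptu := cdf_le mupT (ltW tu); have ntu := cdf_le munT (ltW tu).
have vv1 : (v <= v1)%O by rewrite ge_min lexx.
have vv2 : (v <= v2)%O by rewrite ge_min lexx orbT.
have pvv1 := cdf_le mupT vv1; have nvv2 := cdf_le munT vv2.
(* for mu = mup, mun, both cdf mu t and the integral of the cutoff lie in
   [cdf mu t, cdf mu t + eta] *)
move: (cutoff0 u v Du Dv uv); rewrite /int_signed FmuE ler_norml; lra.
Qed.
End distribution_function.

Section weak_star_null_families.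
Context {d : Order.disp_t} (K : orderTopologicalType d) (k0 : K) (R : realType).
Context (I : Type) (mup mun : I -> {measure set Borel k0 -> \bar R}).
Hypotheses (cK : compact_line K)
  (mu_fin : forall i, (mup i setT < +oo)%E /\ (mun i setT < +oo)%E)
  (mu_null : weak_star_null mup mun).
Variables (F : I -> K -> R) (Q : set K).
Hypotheses (FE : forall i t, F i t = Fmu (mup i) (mun i) t) (FQ : type_c0l1 F Q).

Lemma countable_not_c0_not_right_isolated (H : set K) : closed H -> separable_set H ->
  countable [set t | [/\ Q t, H t, ~ right_isolated H t & ~ c0fam (fun i => F i t)]].
Proof.
move: FQ => [a [b [Fab a0 [M bM]]]] clH [D [DH cD HD]].
pose J := \bigcup_(p in D `*` D)
  [set i | int_signed (mup i) (mun i) (cutoff R p.1 p.2) != 0].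
have cJ : countable J.
  apply: bigcup_countable => [|p _]; first exact: countableX.
  by apply: c0fam_countable_neq0; apply: mu_null; exact: cutoff_continuous.
apply: sub_countable
  (bigcup_countable cJ (fun i _ => esum_bounded_countable_neq0 (bM i))).
apply: subset_card_le => t [Qt Ht tH Fc0]; apply: contrapT => tJ; apply: Fc0.
apply: c0fam_le (a0 t Qt) => i; have [Ji|nJi] := pselect (J i).
  have bi0 : b i t = 0 by apply: contrapT => /eqP bi; case: tJ; exists i.
  by rewrite Fab // bi0 addr0 lexx.
have [mupT munT] := mu_fin i.
suff -> : F i t = 0 by rewrite normr0.
rewrite FE; apply: (Fmu_eq0_of_cutoff cK mupT munT cD).
  exact: dense_approaches_right clH DH HD Ht tH.
move=> u v Du Dv _; apply: contrapT => /eqP uv; apply: nJi.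
by exists (u, v).
Qed.

Lemma countable_not_c0_convex (H : set K) :
  closed H -> separable_set H -> order_convex H ->
  countable [set t | [/\ Q t, H t & ~ c0fam (fun i => F i t)]].
Proof.
move=> clH sH cvH.
have cmax : countable [set t | H t /\ forall s, H s -> (s <= t)%O].
  apply: is_subset1_countable => x y [Hx xmax] [Hy ymax].
  by apply/eqP; rewrite eq_le xmax ?ymax.
apply: sub_countable (countableU (countable_not_c0_not_right_isolated clH sH) cmax).
apply: subset_card_le => t [Qt Ht Fc0].
have [tH|] := pselect (right_isolated H t); last by left.
case: tH => _ [tmax|[s [Hs ts gapH]]]; [by right | exfalso; apply: Fc0].
have gap u : ~ (t < u < s)%O.
  move=> /andP[tu us]; apply: (gapH u); last by rewrite tu us.
  by apply: (cvH t s); rewrite ?(ltW tu) ?(ltW us).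
have -> : (fun i => F i t) =
    (fun i => int_signed (mup i) (mun i) \1_[set x : K | (x <= t)%O]).
  by apply: funext => i; rewrite FE /int_signed !Rintegral_indic_lray.
by apply: mu_null; apply: continuous_indic_clopen; exact: lray_clopen_of_gap gap.
Qed.
End weak_star_null_families.

Theorem theorem3p2 (d : Order.disp_t) (K : orderTopologicalType d) (k0 : K)
  (R : realType) (I : Type) (mup mun : I -> {measure set (Borel k0) -> \bar R})
  (F : I -> K -> R) (Q : set K) :
  compact_line K ->
  (forall i, finite_radon (mup i) /\ finite_radon (mun i)) ->
  (forall i t, F i t = Fmu (mup i) (mun i) t) ->
  weak_star_null mup mun ->
  type_c0l1 F Q ->
  (forall H : set K, closed H -> separable_set H ->
     countable [set t | [/\ Q t, H t, ~ right_isolated H t & ~ c0fam (fun i => F i t)]])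
  /\
  (forall H : set K, closed H -> separable_set H -> order_convex H ->
     countable [set t | [/\ Q t, H t & ~ c0fam (fun i => F i t)]]).
Proof.
move=> cK mu_radon FE mu_null FQ.
have mu_fin i : (mup i setT < +oo)%E /\ (mun i setT < +oo)%E.
  by have [[? _] [? _]] := mu_radon i.
split => H.
- exact: countable_not_c0_not_right_isolated.
- exact: countable_not_c0_convex.
Qed.
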